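(* For all $m\ge h\ge 1$, over the bidirected $(m,h)$-CCN the secrecy rate $h$ is achievable against a $1$-edge passive adversary that observes all values sent on any single directed edge of its choice.
   Context: Network model: a graph with unit-capacity edges; each use of an edge carries one symbol of a finite field $\mathbb{F}$ (taken sufficiently large), and entropies are measured in units of $\log|\mathbb{F}|$. A single source $S$ holds a message $\mathcal{W}$ to be multicast to a set of receivers. Each node may use its own private randomness; nodes share no prior common randomness and no side channel. An $N$-round protocol: in each round every (directed) edge is used at most once. Decodability: every receiver recovers $\mathcal{W}$ with zero error. Secrecy: $H(\mathcal{W}\mid \mathcal{V}_{\mathcal{A}})=H(\mathcal{W})$, where $\mathcal{V}_{\mathcal{A}}$ is the adversary's view, and must hold for every choice of the tapped edge. The secrecy rate is $H(\mathcal{W})/N$. Directed $(m,h)$-CCN ($m\ge h$): nodes $S$, $S_1,\dots,S_h$, $A_1,\dots,A_m$, $B_1,\dots,B_m$, and $\binom{m}{h}$ receivers, one per $h$-subset of $\{B_1,\dots,B_m\}$; directed edges $S\to S_i$ ($1\le i\le h$), $S_i\to A_i$ ($1\le i\le h$), $S_i\to A_j$ for all $1\le i\le h$, $h<j\le m$, $A_j\to B_j$, and $B_j\to R$ whenever $B_j$ is in the $h$-subset of receiver $R$. The bidirected $(m,h)$-CCN is obtained by adding, for every directed edge $u\to v$ of the directed CCN, an additional edge $v\to u$. *)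

From HB Require Import structures.
From mathcomp Require Import all_boot all_algebra.
From Stdlib Require Import Reals.

Set Implicit Arguments.
Unset Strict Implicit.
Unset Printing Implicit Defensive.

(* The (m,h)-combination network (CCN).  Indices are 0-based:               *)
(*   S_i (i < h), A_j, B_j (j < m), one receiver per h-subset of {0..m-1}.   *)

Definition ccn_recv (m h : nat) := {X : {set 'I_m} | #|X| == h}.

Definition ccn_node (m h : nat) :=
  ((((unit + 'I_h) + 'I_m) + 'I_m) + ccn_recv m h)%type.
HB.instance Definition _ m h := Finite.on (ccn_node m h).

Definition nS  (m h : nat) : ccn_node m h := inl (inl (inl (inl tt))).
Definition nSi (m h : nat) (i : 'I_h) : ccn_node m h := inl (inl (inl (inr i))).
Definition nA  (m h : nat) (j : 'I_m) : ccn_node m h := inl (inl (inr j)).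
Definition nB  (m h : nat) (j : 'I_m) : ccn_node m h := inl (inr j).
Definition nR  (m h : nat) (X : ccn_recv m h) : ccn_node m h := inr X.

Definition is_recv (m h : nat) (v : ccn_node m h) : bool :=
  if v is inr _ then true else false.

(* Directed edges of the directed (m,h)-CCN:
   S -> S_i ; S_i -> A_i ; S_i -> A_j (j >= h) ; A_j -> B_j ;
   B_j -> R_X whenever j \in X. *)
Definition ccn_dir (m h : nat) (u v : ccn_node m h) : bool :=
  match u, v with
  | inl (inl (inl (inl _))), inl (inl (inl (inr _))) => true
  | inl (inl (inl (inr i))), inl (inl (inr j)) =>
      (nat_of_ord j == nat_of_ord i) || (h <= j)
  | inl (inl (inr j)), inl (inr j') => j == j'
  | inl (inr j), inr X => j \in val X
  | _, _ => false
  end.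

Definition ccn_bi (m h : nat) (u v : ccn_node m h) : bool :=
  ccn_dir u v || ccn_dir v u.

(* Finite probability and Shannon entropy (in nats; divide by ln |F| to get *)
(* units of log |F|).                                                        *)

Section Entropy.
Local Open Scope R_scope.

Definition prob_of (Sg : finType) (P : Sg -> R) (A : eqType) (X : Sg -> A)
    (a : A) : R :=
  \big[Rplus/0]_(o : Sg) (if X o == a then P o else 0).

Definition entropy (Sg : finType) (P : Sg -> R) (A : eqType) (X : Sg -> A) : R :=
  - \big[Rplus/0]_(a <- undup [seq X o | o <- enum Sg])
        (prob_of P X a * ln (prob_of P X a)).

Definition cond_entropy (Sg : finType) (P : Sg -> R) (A B : eqType)
    (X : Sg -> A) (Y : Sg -> B) : R :=
  entropy P (fun o => (X o, Y o)) - entropy P Y.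

End Entropy.

(* A protocol over field F on node set V with source s:
   - message W of (finite) type msg_t with distribution pW;
   - every node v has private randomness in rnd_t with distribution pRnd v
     (independent across nodes and of W: no common randomness);
   - rounds = N; in round r the edges of sched r are used, in that order
     (each at most once, checked in [valid_protocol]);
   - the k-th transmission (over all rounds, in order) on edge (u,v) carries
     enc k (message if u = s) (randomness of u) (symbols u received so far);
   - receiver r outputs dec r (its randomness) (all symbols it received). *)
Record protocol (F : finFieldType) (V : finType) : Type := Protocol {
  msg_t : finType;
  pW : msg_t -> R;
  rnd_t : finType;
  pRnd : V -> rnd_t -> R;
  rounds : nat;
  sched : 'I_rounds -> seq (V * V);
  enc : nat -> option msg_t -> rnd_t -> seq F -> F;
  dec : V -> rnd_t -> seq F -> msg_t
}.
Arguments msg_t {F V} p.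
Arguments pW {F V} p _.
Arguments rnd_t {F V} p.
Arguments pRnd {F V} p _ _.
Arguments rounds {F V} p.
Arguments sched {F V} p _.
Arguments enc {F V} p _ _ _ _.
Arguments dec {F V} p _ _ _.

Section Protocol.
Variables (F : finFieldType) (V : finType) (s : V) (P : protocol F V).

Definition transmissions : seq (V * V) :=
  flatten [seq sched P r | r <- enum 'I_(rounds P)].

Definition received (u : V) (tr : seq (V * V)) (vals : seq F) : seq F :=
  [seq x.2 | x <- zip tr vals & x.1.2 == u].

Definition outcome := (msg_t P * {ffun V -> rnd_t P})%type.

Definition outcome_prob (o : outcome) : R :=
  Rmult (pW P o.1) (\big[Rmult/R1]_(v : V) pRnd P v (o.2 v)).

Definition run (o : outcome) : seq F :=
  foldl (fun vals e =>
           rcons vals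
             (enc P (size vals) (if e.1 == s then Some o.1 else None)
                  (o.2 e.1)
                  (received e.1 (take (size vals) transmissions) vals)))
        [::] transmissions.

Definition edge_view (e : V * V) (o : outcome) : seq F :=
  [seq x.2 | x <- zip transmissions (run o) & x.1 == e].

Definition message (o : outcome) : msg_t P := o.1.

Definition is_distribution (T : finType) (p : T -> R) : Prop :=
  (forall t, Rle R0 (p t)) /\ \big[Rplus/R0]_(t : T) p t = R1.

Definition valid_protocol (E : rel V) (receivers : pred V) : Prop :=
  [/\ is_distribution (pW P),
      (forall v, is_distribution (pRnd P v)),
      (forall r, uniq (sched P r) /\ all (fun e => E e.1 e.2) (sched P r)),
      (forall r, receivers r -> forall o : outcome, Rlt R0 (outcome_prob o) ->
          dec P r (o.2 r) (received r transmissions (run o)) = o.1)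
    &
      (forall u v, E u v ->
          cond_entropy outcome_prob message (edge_view (u, v))
          = entropy outcome_prob message)].

Definition secrecy_rate : R :=
  Rdiv (entropy outcome_prob message) (Rmult (INR (rounds P)) (ln (INR #|F|))).

End Protocol.

Definition secrecy_rate_achievable (F : finFieldType) (V : finType) (E : rel V)
    (s : V) (receivers : pred V) (r : R) : Prop :=
  exists P : protocol F V,
    [/\ valid_protocol s P E receivers, (0 < rounds P)%N & secrecy_rate P = r].

From HB Require Import structures.
From mathcomp Require Import all_boot all_algebra Rstruct.
From Stdlib Require Import Reals Lra.

Set Implicit Arguments.
Unset Strict Implicit.
Unset Printing Implicit Defensive.

(* The protocol uses a single round.  Every node v draws a uniform table of
   keys rnd_v : V -> F.  First, for each edge u -> v of the directed CCN, the
   head v sends its key rnd_v(u) back to u on the reverse edge.  Then the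
   directed edges are used in order of the level of their tail
   (S, S_i, A_j, B_j); on u -> v the tail sends c(W) + rnd_v(u), a code
   symbol padded with the key just received from v.  Code symbols are
   Reed-Solomon evaluations of the message W in F^h: S sends c_i to S_i,
   S_i and A_j (j < h) relay, A_j (j >= h) recovers W from c_0..c_(h-1),
   B_j relays c_j, and a receiver recovers W from its h distinct symbols.

   Secrecy: whatever edge is tapped, changing the message can be absorbed by
   shifting a single key, a bijection of the randomness; hence the view is
   independent of W and H(W | view) = H(W).  Rate: W is uniform on F^h, so
   one round carries H(W) = h ln |F|. *)

Local Open Scope R_scope.

Lemma sumR_ge0 (I : Type) (r : seq I) (f : I -> R) :
  (forall i, 0 <= f i) -> 0 <= \big[Rplus/0]_(i <- r) f i.
Proof.
move=> f_ge0; elim: r => [|x r IH]; first by rewrite big_nil; lra.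
by rewrite big_cons; have := f_ge0 x; lra.
Qed.

Lemma sumR_const (I : finType) (x : R) : \big[Rplus/0]_(i : I) x = INR #|I| * x.
Proof.
rewrite big_const; elim: #|I| => [|n IH]; first by rewrite /=; ring.
by rewrite iterS IH S_INR; ring.
Qed.

Lemma sumR_extend (C : eqType) (s t : seq C) (f : C -> R) :
  uniq s -> uniq t -> {subset s <= t} ->
  (forall x, x \in t -> x \notin s -> f x = 0) ->
  \big[Rplus/0]_(x <- s) f x = \big[Rplus/0]_(x <- t) f x.
Proof.
move=> s_uniq t_uniq s_sub_t f0.
rewrite [RHS](bigID (mem s)) /= [X in _ + X]big1_seq ?Rplus_0_r; last first.
  by move=> x /andP[/negbTE xs xt]; apply: f0; rewrite ?xs.
rewrite -(big_filter t); apply: perm_big; apply: uniq_perm; rewrite ?filter_uniq //.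
by move=> x; rewrite mem_filter andb_idr //; apply: s_sub_t.
Qed.

Definition xlnx (x : R) : R := x * ln x.

Lemma xlnx_mul a b : 0 <= a -> 0 <= b -> xlnx (a * b) = b * xlnx a + a * xlnx b.
Proof.
rewrite /xlnx => a_ge0 b_ge0.
case: (Req_dec a 0) => [->|a_neq0]; first by rewrite Rmult_0_l; ring.
case: (Req_dec b 0) => [->|b_neq0]; first by ring.
by rewrite ln_mult; [ring | lra | lra].
Qed.

Section Entropy.
Variables (Sg : finType) (P : Sg -> R).
Hypothesis P_ge0 : forall o, 0 <= P o.
Hypothesis P_total : \big[Rplus/0]_(o : Sg) P o = 1.

Let support (C : eqType) (X : Sg -> C) := undup [seq X o | o <- enum Sg].

Lemma prob_ge0 (C : eqType) (X : Sg -> C) c : 0 <= prob_of P X c.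
Proof. by apply: sumR_ge0 => o; case: ifP => _ //; lra. Qed.

Lemma prob_total (C : eqType) (X : Sg -> C) :
  \big[Rplus/0]_(c <- support X) prob_of P X c = 1.
Proof.
rewrite -P_total /prob_of exchange_big /=; apply: eq_bigr => o _.
have Xo : X o \in support X by rewrite mem_undup map_f ?mem_enum.
rewrite (bigD1_seq (X o)) ?undup_uniq //= eqxx big1 /= ?Rplus_0_r //.
by move=> c /negbTE; rewrite eq_sym => ->.
Qed.

Lemma prob_notin (C : eqType) (X : Sg -> C) c :
  c \notin support X -> prob_of P X c = 0.
Proof.
move=> c_out; apply: big1 => o _; case: eqP => // Xo.
by case/negP: c_out; rewrite -Xo mem_undup map_f ?mem_enum.
Qed.

Lemma indep_cond_entropy (A B : eqType) (W : Sg -> A) (Y : Sg -> B) :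
  (forall a b, prob_of P (fun o => (W o, Y o)) (a, b)
               = prob_of P W a * prob_of P Y b) ->
  cond_entropy P W Y = entropy P W.
Proof.
move=> indep; rewrite /cond_entropy /entropy -/(support W) -/(support Y).
set sW := support W; set sY := support Y.
set pWY := prob_of P (fun o => (W o, Y o)).
have joint_pairs : \big[Rplus/0]_(p <- support (fun o => (W o, Y o))) (pWY p * ln (pWY p))
    = \big[Rplus/0]_(p <- [seq (a, b) | a <- sW, b <- sY]) xlnx (pWY p).
  apply: sumR_extend; rewrite ?undup_uniq //.
  - by rewrite allpairs_uniq ?undup_uniq // => -[a b] [a' b'] _ _ [-> ->].
  - move=> [a b]; rewrite mem_undup => /mapP[o _ [-> ->]].
    by apply: allpairs_f; rewrite mem_undup map_f ?mem_enum.
  - by move=> p _ /prob_notin; rewrite /pWY => ->; rewrite Rmult_0_l.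
have row a : \big[Rplus/0]_(b <- sY) xlnx (pWY (a, b))
    = xlnx (prob_of P W a) + prob_of P W a * \big[Rplus/0]_(b <- sY) xlnx (prob_of P Y b).
  rewrite (eq_bigr (fun b => prob_of P Y b * xlnx (prob_of P W a)
                             + prob_of P W a * xlnx (prob_of P Y b))); last first.
    by move=> b _; rewrite /pWY indep xlnx_mul //; apply: prob_ge0.
  by rewrite big_split /= -big_distrl -big_distrr /= prob_total; ring.
rewrite joint_pairs big_allpairs (eq_bigr _ (fun a _ => row a)) big_split /=.
by rewrite -big_distrl /= prob_total /xlnx; ring.
Qed.

End Entropy.

(* A uniform distribution on a product [M * Rf]: [M] models the message and
   [Rf] the private randomness. *)
Section UniformProduct.
Variables (M Rf : finType) (c : R) (P : M * Rf -> R).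
Hypothesis P_const : forall o, P o = c.
Hypothesis c_ge0 : 0 <= c.
Hypothesis c_total : c * (INR #|M| * INR #|Rf|) = 1.

Lemma sum_pair (f : M * Rf -> R) :
  \big[Rplus/0]_(o : M * Rf) f o = \big[Rplus/0]_(w : M) \big[Rplus/0]_(r : Rf) f (w, r).
Proof. by rewrite pair_bigA; apply: eq_bigr => -[]. Qed.

Lemma uniform_total : \big[Rplus/0]_(o : M * Rf) P o = 1.
Proof.
rewrite (eq_bigr (fun=> c)) => [|o _]; last exact: P_const.
by rewrite sumR_const card_prod mult_INR -c_total; ring.
Qed.

Lemma slice_prob (B : eqType) (Y : M * Rf -> B) w y :
  prob_of P (fun o => (o.1, Y o)) (w, y)
  = \big[Rplus/0]_(r : Rf) (if Y (w, r) == y then c else 0).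
Proof.
rewrite /prob_of sum_pair (bigD1 w) //= [X in _ + X]big1 ?Rplus_0_r; last first.
  by move=> w' /negbTE w'w; apply: big1 => r _; rewrite xpair_eqE w'w.
by apply: eq_bigr => r _; rewrite xpair_eqE eqxx P_const.
Qed.

Lemma uniform_msg_prob w : prob_of P (fun o => o.1) w = INR #|Rf| * c.
Proof.
have := slice_prob (fun=> tt) w tt; rewrite eqxx sumR_const => <-.
by apply: eq_bigr => o _; rewrite xpair_eqE eqxx andbT.
Qed.

Lemma uniform_msg_entropy (r0 : Rf) : entropy P (fun o => o.1) = ln (INR #|M|).
Proof.
rewrite /entropy; set L := undup _.
have L_enum : perm_eq L (enum M).
  apply: uniq_perm; rewrite ?undup_uniq ?enum_uniq // => w.
  by rewrite mem_undup mem_enum; apply/mapP; exists (w, r0); rewrite ?mem_enum.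
rewrite (perm_big _ L_enum) /= (eq_bigr (fun=> xlnx (INR #|Rf| * c))); last first.
  by move=> w _; rewrite uniform_msg_prob.
rewrite big_enum /= sumR_const.
have M_pos : 0 < INR #|M|.
  have := pos_INR #|M|; case/Rle_lt_or_eq_dec => // M0.
  by move: c_total; rewrite -M0 Rmult_0_l Rmult_0_r; lra.
have -> : INR #|Rf| * c = / INR #|M|.
  by apply: (Rmult_eq_reg_l (INR #|M|)); [rewrite Rinv_r -?c_total; [ring|lra] | lra].
by rewrite /xlnx ln_Rinv // -Rmult_assoc Rinv_r ?Rmult_1_l ?Ropp_involutive //; lra.
Qed.

(* If, for any two messages, some injection of the randomness carries the
   view of the first to the view of the second, then the view is
   independent of the message and reveals nothing: H(W | Y) = H(W). *)
Lemma transported_view_secret (B : eqType) (Y : M * Rf -> B) :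
  (forall w w', exists2 s : Rf -> Rf, injective s & forall r, Y (w, r) = Y (w', s r)) ->
  cond_entropy P (fun o => o.1) Y = entropy P (fun o => o.1).
Proof.
move=> transport; apply: indep_cond_entropy.
- by move=> o; rewrite P_const.
- exact: uniform_total.
move=> w y; rewrite slice_prob uniform_msg_prob.
have fiber_eq w' : \big[Rplus/0]_(r : Rf) (if Y (w', r) == y then c else 0)
                 = \big[Rplus/0]_(r : Rf) (if Y (w, r) == y then c else 0).
  have [s s_inj Ys] := transport w' w.
  by rewrite [RHS](reindex_inj s_inj); apply: eq_bigr => r _; rewrite Ys.
have -> : prob_of P Y y = INR #|M| * \big[Rplus/0]_(r : Rf) (if Y (w, r) == y then c else 0).
  rewrite /prob_of sum_pair -sumR_const; apply: eq_bigr => w' _.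
  by rewrite -(fiber_eq w'); apply: eq_bigr => r _; rewrite P_const.
by rewrite -[LHS]Rmult_1_r -c_total; ring.
Qed.

End UniformProduct.

Local Close Scope R_scope.
Import GRing.Theory.
Local Open Scope ring_scope.

(* Reed-Solomon encoding of a message w in F^h: the k-th code symbol is the
   value, at the k-th element of F, of the polynomial with coefficients w. *)
Section ReedSolomon.
Variables (h : nat) (F : finFieldType).

Definition rs_point (k : nat) : F := nth 0 (enum F) k.

Definition rs_poly (w : {ffun 'I_h -> F}) : {poly F} :=
  \poly_(i < h) (if insub i is Some j then w j else 0).

Definition rs_sym (k : nat) (w : {ffun 'I_h -> F}) : F := (rs_poly w).[rs_point k].

Lemma rs_points_uniq (S : seq nat) :
  uniq S -> all (fun k => k < #|F|)%nat S -> uniq (map rs_point S).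
Proof.
move=> S_uniq S_small; rewrite map_inj_in_uniq // => x y xS yS.
have x_lt : (x < size (enum F))%nat by rewrite -cardE; apply: (allP S_small).
have y_lt : (y < size (enum F))%nat by rewrite -cardE; apply: (allP S_small).
by rewrite /rs_point => Exy; apply/eqP; rewrite -(nth_uniq 0 x_lt y_lt (enum_uniq F)) Exy.
Qed.

(* MDS property: h code symbols at distinct points determine the message,
   since the difference polynomial has degree < h and h roots. *)
Lemma rs_sym_inj (S : seq nat) w w' :
  uniq S -> all (fun k => k < #|F|)%nat S -> (h <= size S)%nat ->
  (forall k, k \in S -> rs_sym k w = rs_sym k w') -> w = w'.
Proof.
move=> S_uniq S_small S_size Eww'.
have diff0 : rs_poly w - rs_poly w' = 0.
  apply: (@roots_geq_poly_eq0 _ _ (map rs_point S)).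
  - apply/allP => x /mapP[k kS ->]; rewrite /root hornerD hornerN.
    by rewrite -/(rs_sym k w) -/(rs_sym k w') Eww' // subrr.
  - exact: rs_points_uniq.
  - rewrite size_map (leq_trans _ S_size) // (leq_trans (size_polyD _ _)) //.
    by rewrite size_polyN geq_max !size_poly.
apply/ffunP => j; have := congr1 (fun p : {poly F} => p`_j) diff0.
by rewrite coefB !coef_poly ltn_ord valK coef0 => /eqP; rewrite subr_eq0 => /eqP.
Qed.

Definition rs_decode (I : finType) (pt : I -> nat) (A : {pred I}) (y : I -> F) :
    option {ffun 'I_h -> F} :=
  [pick w : {ffun 'I_h -> F} | [forall i in A, rs_sym (pt i) w == y i]].

Lemma rs_decode_correct (I : finType) (pt : I -> nat) (A : {pred I}) (y : I -> F) w :
  injective pt -> (forall i, pt i < #|F|)%nat -> (h <= #|A|)%nat ->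
  (forall i, i \in A -> y i = rs_sym (pt i) w) -> rs_decode pt A y = Some w.
Proof.
move=> pt_inj pt_small A_big obs; rewrite /rs_decode.
case: pickP => [w' w'_ok|no_w]; last first.
  by case/negP: (negbT (no_w w)); apply/forall_inP => i iA; rewrite obs.
congr Some; apply: (@rs_sym_inj (map pt (enum A))).
- by rewrite map_inj_uniq ?enum_uniq.
- by apply/allP => _ /mapP[i _ ->].
- by rewrite size_map -cardE.
move=> _ /mapP[i iA ->]; rewrite mem_enum in iA.
by rewrite (eqP (forall_inP w'_ok i iA)) obs.
Qed.

End ReedSolomon.

Lemma zip_map_filter (T U : Type) (t : seq T) (f : T -> U) (p : pred T) :
  [seq x.2 | x <- zip t (map f t) & p x.1] = [seq f x | x <- t & p x].
Proof. by elim: t => //= x t IH; case: (p x) => /=; rewrite IH. Qed.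

Lemma nth_filter_count (T U : Type) (x0 : T) (y0 : U) (t : seq T) (f : T -> U)
    (p : pred T) i :
  (i < size t)%nat -> p (nth x0 t i) ->
  nth y0 [seq f x | x <- t & p x] (count p (take i t)) = f (nth x0 t i).
Proof.
elim: t i => [|x t IH] [|i] //= i_lt p_i; first by rewrite p_i.
by case: (p x) => /=; rewrite ?add0n ?add1n IH.
Qed.

Section CCNProtocol.
Variables (m h : nat) (F : finFieldType).
Hypothesis h_le_m : (h <= m)%nat.
Hypothesis m_le_F : (m <= #|F|)%nat.

Local Notation V := (ccn_node m h).
Local Notation edge := (V * V)%type.

Definition msg_space := {ffun 'I_h -> F}.
Definition key_table := {ffun V -> F}.

(* The depth of a node in the directed CCN; each directed edge goes one
   level down, so the directed CCN has no pair of opposite edges. *)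
Definition level (v : V) : nat :=
  match v with
  | inl (inl (inl (inl _))) => 0
  | inl (inl (inl (inr _))) => 1
  | inl (inl (inr _)) => 2
  | inl (inr _) => 3
  | inr _ => 4
  end.

Lemma dir_level (u v : V) : ccn_dir u v -> level v = (level u).+1.
Proof. by case: u => [[[[u|u]|u]|u]|u]; case: v => [[[[v|v]|v]|v]|v]. Qed.

Lemma dir_asym (u v : V) : ccn_dir u v -> ~~ ccn_dir v u.
Proof.
move=> /dir_level uv; apply/negP => /dir_level /eqP.
by rewrite uv -addn2 -[X in X == _]addn0 eqn_add2l.
Qed.

Definition by_level (e e' : edge) : bool := (level e.1 <= level e'.1)%nat.

Definition fwd_edges : seq edge :=
  locked (sort by_level [seq e <- enum (@predT edge) | ccn_dir e.1 e.2]).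

Definition key_edges : seq edge := [seq (e.2, e.1) | e <- fwd_edges].

Definition schedule : seq edge := key_edges ++ fwd_edges.

Lemma mem_fwd (e : edge) : (e \in fwd_edges) = ccn_dir e.1 e.2.
Proof. by rewrite /fwd_edges -lock mem_sort mem_filter mem_enum andbT. Qed.

Lemma mem_keys (e : edge) : (e \in key_edges) = ccn_dir e.2 e.1.
Proof.
apply/mapP/idP => [[x xf ->]|dir_e]; first by rewrite /= -mem_fwd.
by exists (e.2, e.1); [rewrite mem_fwd | case: e {dir_e}].
Qed.

Lemma fwd_notin_keys (e : edge) : e \in fwd_edges -> e \notin key_edges.
Proof. by rewrite mem_fwd mem_keys => /dir_asym. Qed.

Lemma fwd_uniq : uniq fwd_edges.
Proof. by rewrite /fwd_edges -lock sort_uniq filter_uniq // enum_uniq. Qed.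

Lemma schedule_uniq : uniq schedule.
Proof.
rewrite cat_uniq fwd_uniq andbT map_inj_uniq ?fwd_uniq; last first.
  by move=> [? ?] [? ?] [-> ->].
by apply/hasPn => e /fwd_notin_keys.
Qed.

Lemma schedule_edges (e : edge) : e \in schedule -> ccn_bi e.1 e.2.
Proof.
rewrite /ccn_bi mem_cat mem_keys mem_fwd.
by case/orP=> ->; rewrite ?orbT.
Qed.

Lemma index_key (x : edge) :
  x \in key_edges -> (index x schedule < size key_edges)%nat.
Proof. by move=> xk; rewrite /schedule index_cat xk index_mem. Qed.

Lemma index_fwd (x : edge) :
  x \in fwd_edges -> index x schedule = (size key_edges + index x fwd_edges)%nat.
Proof.
by move=> xf; rewrite /schedule index_cat (negbTE (fwd_notin_keys xf)).
Qed.

Lemma fwd_scheduled_before (x e : edge) :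
  x \in fwd_edges -> e \in fwd_edges -> (level x.1 < level e.1)%nat ->
  (index x schedule < index e schedule)%nat.
Proof.
move=> xf ef lvl_xe; rewrite !index_fwd // ltn_add2l ltnNge; apply/negP => ex.
have sorted_fwd : sorted by_level fwd_edges.
  by rewrite /fwd_edges -lock; apply: sort_sorted => u v; apply: leq_total.
have := sorted_leq_index (fun y x z => @leq_trans (level y.1) (level x.1) (level z.1))
  (fun a => leqnn (level a.1)) sorted_fwd e x ef xf ex.
by rewrite /by_level leqNgt lvl_xe.
Qed.

(* The symbol that node u has received on edge e, read from the list recv of
   everything u received so far (in schedule order). *)
Definition symbol_on (u : V) (recv : seq F) (e : edge) : F :=
  nth 0 recv (count (fun x : edge => x.2 == u) (take (index e schedule) schedule)).

(* Removing the key that a itself supplied for the edge u -> a. *)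
Definition plain_from (a u : V) (rnd : key_table) (recv : seq F) : F :=
  symbol_on a recv (u, a) - rnd u.

Definition decode_at (a : V) (rnd : key_table) (recv : seq F) : option msg_space :=
  rs_decode h (@nat_of_ord h) 'I_h (fun i => plain_from a (nSi m i) rnd recv).

Definition payload (e : edge) (msg : option msg_space) (rnd : key_table)
    (recv : seq F) : F :=
  let a := e.1 in
  match a with
  | inl (inl (inl (inl _))) =>
      if e.2 is inl (inl (inl (inr i))) then
        (if msg is Some w then rs_sym i w else 0) else 0
  | inl (inl (inl (inr i))) => plain_from a (nS m h) rnd recv
  | inl (inl (inr j)) =>
      if (insub (nat_of_ord j) : option 'I_h) is Some i then
        plain_from a (nSi m i) rnd recv
      else if decode_at a rnd recv is Some w then rs_sym j w else 0
  | inl (inr j) => plain_from a (nA h j) rnd recv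
  | inr _ => 0
  end.

Definition no_edge : edge := (nS m h, nS m h).

Definition ccn_enc (k : nat) (msg : option msg_space) (rnd : key_table)
    (recv : seq F) : F :=
  let e := nth no_edge schedule k in
  if (k < size key_edges)%nat then rnd e.2
  else payload e msg rnd recv + symbol_on e.1 recv (e.2, e.1).

Definition ccn_dec (r : V) (rnd : key_table) (recv : seq F) : msg_space :=
  if r is inr X then
    odflt [ffun => 0]
      (rs_decode h (@nat_of_ord m) (val X) (fun j => plain_from r (nB h j) rnd recv))
  else [ffun => 0].

Definition ccn_protocol : protocol F V :=
  @Protocol F V msg_space (fun _ => Rinv (INR #|msg_space|))
    key_table (fun _ _ => Rinv (INR #|key_table|)) 1 (fun _ => schedule)
    ccn_enc ccn_dec.

Lemma transmissions_ccn : transmissions ccn_protocol = schedule.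
Proof.
rewrite /transmissions /=.
have : size (enum 'I_1) = 1%nat by rewrite size_enum_ord.
by case: (enum 'I_1) => [|x [|y s]] //= _; rewrite cats0.
Qed.

Definition code_index (e : edge) : nat :=
  match e.1 with
  | inl (inl (inl (inl _))) =>
      if e.2 is inl (inl (inl (inr i))) then nat_of_ord i else 0
  | inl (inl (inl (inr i))) => nat_of_ord i
  | inl (inl (inr j)) => nat_of_ord j
  | inl (inr j) => nat_of_ord j
  | inr _ => 0
  end.

Definition edge_symbol (o : outcome ccn_protocol) (e : edge) : F :=
  if e \in fwd_edges then rs_sym (code_index e) o.1 + o.2 e.2 e.1
  else o.2 e.1 e.2.

(* What node u has received before transmission k, if every earlier edge
   carried its intended symbol. *)
Definition received_before (o : outcome ccn_protocol) (k : nat) (u : V) : seq F :=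
  received u (take k schedule) (take k (map (edge_symbol o) schedule)).

Lemma symbol_on_received o k (x : edge) :
  (k <= size schedule)%nat -> (index x schedule < k)%nat ->
  symbol_on x.2 (received_before o k x.2) x = edge_symbol o x.
Proof.
move=> k_le x_before; have x_in : x \in schedule.
  by rewrite -index_mem (leq_trans x_before k_le).
rewrite /symbol_on /received_before /received -map_take.
rewrite (zip_map_filter _ _ (fun y : edge => y.2 == x.2)).
have -> : take (index x schedule) schedule
        = take (index x schedule) (take k schedule) by rewrite take_takel // ltnW.
rewrite (nth_filter_count (x0 := no_edge)) ?nth_take ?nth_index ?size_take //.
by case: ifP => _ //; rewrite index_mem.
Qed.

Lemma payload_correct (o : outcome ccn_protocol) (a b : V) (recv : seq F) :
  ccn_dir a b ->
  (forall x, x \in fwd_edges -> x.2 = a -> (level x.1 < level a)%nat ->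
     symbol_on a recv x = rs_sym (code_index x) o.1 + o.2 a x.1) ->
  payload (a, b) (if a == nS m h then Some o.1 else None) (o.2 a) recv
  = rs_sym (code_index (a, b)) o.1.
Proof.
move=> dir_ab from_below.
have plain u : ccn_dir u a ->
    plain_from a u (o.2 a) recv = rs_sym (code_index (u, a)) o.1.
  move=> dir_ua; rewrite /plain_from (from_below (u, a)) ?mem_fwd ?addrK //.
  by rewrite (dir_level dir_ua).
case: a dir_ab {from_below} plain => [[[[u|i]|j]|j]|X];
  case: b => [[[[u'|i']|j']|j']|X'] //= dir_ab plain.
- by rewrite /payload /= plain.
- move/eqP: dir_ab => <-; rewrite /payload /=.
  case: insubP => [i _ ij|j_ge_h].
    have ij' : nat_of_ord i = j := ij.
    by rewrite plain /nSi /code_index /= ij' ?eqxx.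
  rewrite /decode_at (rs_decode_correct (w := o.1)) ?card_ord //.
  - exact: ord_inj.
  - by move=> i; apply: leq_trans (ltn_ord i) (leq_trans h_le_m m_le_F).
  - by move=> i _; rewrite plain //= leqNgt j_ge_h orbT.
- by rewrite /payload /= plain /nA /= ?eqxx.
Qed.

(* Transmission k carries its intended symbol, provided all earlier
   transmissions did: a key edge sends a key of its tail, and a forward edge
   sends the payload padded with the key its head sent back earlier. *)
Lemma enc_correct (o : outcome ccn_protocol) k (e : edge) :
  (k < size schedule)%nat -> nth no_edge schedule k = e ->
  ccn_enc k (if e.1 == nS m h then Some o.1 else None) (o.2 e.1)
    (received_before o k e.1) = edge_symbol o e.
Proof.
move=> k_lt e_def; rewrite /ccn_enc e_def.
have k_idx : index e schedule = k by rewrite -e_def index_uniq ?schedule_uniq.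
case: ifP => k_key.
  have ek : e \in key_edges by rewrite -e_def /schedule nth_cat k_key mem_nth.
  have enf : e \notin fwd_edges by apply: contraL ek; apply: fwd_notin_keys.
  by rewrite /edge_symbol (negbTE enf).
have ef : e \in fwd_edges.
  have keys_le : (size key_edges <= k)%nat by rewrite leqNgt k_key.
  by rewrite -e_def /schedule nth_cat k_key mem_nth // ltn_subLR // -size_cat.
have key_ok : symbol_on e.1 (received_before o k e.1) (e.2, e.1) = o.2 e.2 e.1.
  have xk : (e.2, e.1) \in key_edges by rewrite mem_keys /= -mem_fwd.
  have xnf : (e.2, e.1) \notin fwd_edges by apply: contraL xk; apply: fwd_notin_keys.
  rewrite (symbol_on_received o (x := (e.2, e.1))) ?(ltnW k_lt) //.
    by rewrite /edge_symbol (negbTE xnf).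
  by apply: (leq_trans (index_key xk)); rewrite leqNgt k_key.
have below x : x \in fwd_edges -> x.2 = e.1 -> (level x.1 < level e.1)%nat ->
    symbol_on e.1 (received_before o k e.1) x = rs_sym (code_index x) o.1 + o.2 e.1 x.1.
  move=> xf x_to_e lvl_x; rewrite -x_to_e symbol_on_received ?(ltnW k_lt) //.
    by rewrite /edge_symbol xf.
  by rewrite -k_idx; apply: fwd_scheduled_before.
rewrite key_ok /edge_symbol ef; congr (_ + _).
move: ef below; clear e_def k_idx key_ok; case: e => a b /=.
by rewrite mem_fwd => dir_ab below; apply: payload_correct.
Qed.

Lemma run_correct (o : outcome ccn_protocol) :
  run (nS m h) o = map (edge_symbol o) schedule.
Proof.
rewrite /run transmissions_ccn; set step := fun vals e => _.
suff prefix k : (k <= size schedule)%nat ->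
    foldl step [::] (take k schedule) = take k (map (edge_symbol o) schedule).
  by have := prefix _ (leqnn _); rewrite take_size take_oversize ?size_map.
elim: k => [|k IH] k_lt; first by rewrite !take0.
rewrite (take_nth no_edge k_lt) foldl_rcons IH ?(ltnW k_lt) //.
rewrite (take_nth 0) ?size_map // {1}/step size_take size_map k_lt.
by rewrite (nth_map no_edge) //; congr rcons; apply: enc_correct.
Qed.

Lemma edge_view_ccn (o : outcome ccn_protocol) (e : edge) :
  edge_view (nS m h) e o = if e \in schedule then [:: edge_symbol o e] else [::].
Proof.
rewrite /edge_view run_correct transmissions_ccn.
rewrite (zip_map_filter _ _ (fun y => y == e)).
case: ifP => e_in; first by rewrite (filter_pred1_uniq schedule_uniq e_in).
suff -> : [seq x <- schedule | x == e] = [::] by [].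
by apply/eqP; rewrite -size_eq0 size_filter; apply/eqP/count_memPn; rewrite e_in.
Qed.

Lemma dec_correct (o : outcome ccn_protocol) (X : ccn_recv m h) :
  ccn_dec (nR X) (o.2 (nR X))
    (received (nR X) schedule (map (edge_symbol o) schedule)) = o.1.
Proof.
have full : received (nR X) schedule (map (edge_symbol o) schedule)
          = received_before o (size schedule) (nR X).
  by rewrite /received_before take_size take_oversize // size_map.
have plain j : j \in val X ->
    plain_from (nR X) (nB h j) (o.2 (nR X)) (received_before o (size schedule) (nR X))
    = rs_sym j o.1.
  move=> jX; have jf : (nB h j, nR X) \in fwd_edges by rewrite mem_fwd.
  rewrite /plain_from (symbol_on_received o (x := (nB h j, nR X))) //.
    by rewrite /edge_symbol jf addrK.
  by rewrite index_mem mem_cat jf orbT.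
rewrite full /ccn_dec /nR /= (rs_decode_correct (w := o.1)) //.
- exact: ord_inj.
- by move=> j; apply: leq_trans (ltn_ord j) m_le_F.
- by case: X {full plain} => X /= /eqP ->.
Qed.

End CCNProtocol.

(* Adding d to the key that node a holds for node b: a bijection of the
   nodes' randomness, used to absorb a change of message on one edge. *)
Definition shift_key (V : finType) (F : finFieldType) (a b : V) (d : F)
    (r : {ffun V -> {ffun V -> F}}) : {ffun V -> {ffun V -> F}} :=
  [ffun v => if v == a then [ffun u => if u == b then d + r v u else r v u] else r v].

Lemma shift_keyK (V : finType) (F : finFieldType) (a b : V) (d : F) :
  cancel (shift_key a b d) (shift_key a b (- d)).
Proof.
move=> r; apply/ffunP => v; rewrite !ffunE; case: eqP => // ->.
by apply/ffunP => u; rewrite !ffunE; case: eqP => // _; rewrite addKr.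
Qed.

(* The symbol on any edge depends on the message only through a one-time
   pad: for any two messages, shifting one key transports the symbol. *)
Lemma edge_symbol_transport (m h : nat) (F : finFieldType)
    (e : ccn_node m h * ccn_node m h) (w w' : msg_space h F) :
  exists2 s : {ffun ccn_node m h -> key_table m h F} -> {ffun ccn_node m h -> key_table m h F},
    injective s & forall r, @edge_symbol m h F (w, r) e = @edge_symbol m h F (w', s r) e.
Proof.
rewrite /edge_symbol /=; case: (e \in fwd_edges m h); last by exists (fun r => r).
set d := rs_sym (code_index e) w - rs_sym (code_index e) w'.
exists (shift_key e.2 e.1 d); first exact: can_inj (shift_keyK _ _ _).
by move=> r; rewrite !ffunE eqxx ffunE eqxx /d addrCA addrA subrK.
Qed.

Local Close Scope ring_scope.
Local Open Scope R_scope.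

Lemma prodR_const (I : finType) (x : R) : \big[Rmult/1]_(i : I) x = x ^ #|I|.
Proof. by rewrite big_const; elim: #|I| => //= n ->. Qed.

Lemma INR_expn a n : INR (expn a n) = INR a ^ n.
Proof. by rewrite !INRE natrX RpowE. Qed.

Lemma uniform_distribution (T : finType) (x : T) :
  is_distribution (fun _ : T => / INR #|T|).
Proof.
have T_pos : 0 < INR #|T| by apply: lt_0_INR; apply/ltP/card_gt0P; exists x.
split=> [_|]; first exact/Rlt_le/Rinv_0_lt_compat.
by rewrite sumR_const Rinv_r //; lra.
Qed.

Definition uniform_weight (M K I : finType) : R :=
  / INR #|M| * \big[Rmult/1]_(i : I) / INR #|K|.

Lemma uniform_weight_ge0 (M K I : finType) (w0 : M) (k0 : K) :
  0 <= uniform_weight M K I.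
Proof.
rewrite /uniform_weight prodR_const; apply/Rmult_le_pos/pow_le;
  apply/Rlt_le/Rinv_0_lt_compat/lt_0_INR/ltP/card_gt0P; [by exists w0 | by exists k0].
Qed.

Lemma uniform_weight_total (M K I : finType) (w0 : M) (k0 : K) :
  uniform_weight M K I * (INR #|M| * INR #|{ffun I -> K}|) = 1.
Proof.
have M_pos : 0 < INR #|M| by apply/lt_0_INR/ltP/card_gt0P; exists w0.
have K_pos : 0 < INR #|K| by apply/lt_0_INR/ltP/card_gt0P; exists k0.
rewrite /uniform_weight prodR_const card_ffun INR_expn pow_inv.
have KI_pos : 0 < INR #|K| ^ #|I| by apply: pow_lt.
by move: (INR #|K| ^ #|I|) KI_pos => c c_pos; field; lra.
Qed.

Section CCNSecurity.
Variables (m h : nat) (F : finFieldType).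
Hypothesis h_le_m : (h <= m)%nat.
Hypothesis m_le_F : (m <= #|F|)%nat.

Local Notation PR := (ccn_protocol m h F).
Local Notation weight :=
  (uniform_weight (msg_space h F) (key_table m h F) (ccn_node m h)).

Lemma ccn_outcome_prob (o : outcome PR) : outcome_prob o = weight.
Proof. by []. Qed.

Lemma ccn_weight_ge0 : 0 <= weight.
Proof. exact: uniform_weight_ge0 [ffun => @GRing.zero F] [ffun => @GRing.zero F]. Qed.

Lemma ccn_weight_total :
  weight * (INR #|msg_space h F| * INR #|{ffun ccn_node m h -> key_table m h F}|) = 1.
Proof. exact: uniform_weight_total [ffun => @GRing.zero F] [ffun => @GRing.zero F]. Qed.

Lemma ccn_secret (e : ccn_node m h * ccn_node m h) :
  cond_entropy (@outcome_prob F _ PR) (@message F _ PR) (edge_view (nS m h) e)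
  = entropy (@outcome_prob F _ PR) (@message F _ PR).
Proof.
apply: (transported_view_secret ccn_outcome_prob ccn_weight_ge0 ccn_weight_total).
move=> w w'; have [s s_inj transport] := edge_symbol_transport e w w'.
exists s => // r; rewrite !edge_view_ccn //; case: (e \in schedule m h) => //.
by congr [:: _]; apply: transport.
Qed.

Lemma ccn_valid : valid_protocol (nS m h) PR (@ccn_bi m h) (@is_recv m h).
Proof.
split.
- exact: uniform_distribution [ffun => @GRing.zero F].
- by move=> v; apply: uniform_distribution [ffun => @GRing.zero F].
- by move=> r; split; [exact: schedule_uniq | apply/allP => e /schedule_edges].
- case=> // X _ o _; rewrite transmissions_ccn run_correct //; exact: dec_correct.
- by move=> u v _; apply: ccn_secret.
Qed.

Lemma ccn_rate : secrecy_rate PR = INR h.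
Proof.
rewrite /secrecy_rate (uniform_msg_entropy ccn_outcome_prob ccn_weight_total
  [ffun => [ffun => @GRing.zero F]]) card_ffun card_ord INR_expn.
set q := INR #|F|.
have q_gt1 : 1 < q by apply: (lt_INR 1); apply/ltP/card_finNzRing_gt1.
have lnq_pos : 0 < ln q by rewrite -ln_1; apply: ln_increasing; lra.
rewrite ln_pow /=; last lra.
by move: (ln q) lnq_pos => l l_pos; field; lra.
Qed.

End CCNSecurity.

Local Close Scope R_scope.

Theorem lemma3 (m h : nat) (h_pos : (1 <= h)%N) (h_le_m : (h <= m)%N) :
  exists q0 : nat, forall F : finFieldType, (q0 <= #|F|)%N ->
    secrecy_rate_achievable F (@ccn_bi m h) (nS m h) (@is_recv m h) (INR h).
Proof.
exists m => F m_le_F; exists (ccn_protocol m h F); split.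
- exact: ccn_valid.
- by [].
- exact: ccn_rate.
Qed.
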